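(* Let $\gamma$ be a cover-preserving join-congruence of the square grid $G$ such that $(c_{i-1},c_i)\notin\gamma$ and $(d_{i-1},d_i)\notin\gamma$ for all $i\in\{1,\dots,n\}$. Then $\gamma=\bigvee_{B}\mathrm{con}(B)$, where $B$ ranges over the source cells of $\gamma$, $\mathrm{con}(B)$ is the smallest join-congruence of $G$ collapsing the two upper edges of $B$, and the join is taken in the lattice of join-congruences of $(G;\vee)$.
   Context: $G$ is the direct product of chains $0=c_0\prec\dots\prec c_n$ and $0=d_0\prec\dots\prec d_n$, its elements written uniquely as $c_i\vee d_j$. A join-congruence is an equivalence relation compatible with $\vee$; it is cover-preserving if it is the kernel of a join-homomorphism $\varphi$ with $x\prec y\Rightarrow\varphi(x)\preceq\varphi(y)$. For $i,j\ge1$ the 4-cell with top $c_i\vee d_j$ is $B=\{c_{i-1}\vee d_{j-1},c_{i-1}\vee d_j,c_i\vee d_{j-1},c_i\vee d_j\}$, with upper edges $[c_{i-1}\vee d_j,c_i\vee d_j]$ and $[c_i\vee d_{j-1},c_i\vee d_j]$; $B$ is a source cell of $\gamma$ if $c_{i-1}\vee d_j$, $c_i\vee d_{j-1}$, $c_i\vee d_j$ lie in one $\gamma$-class not containing $c_{i-1}\vee d_{j-1}$. *)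

From HB Require Import structures.
From mathcomp Require Import all_boot all_order.
Set Implicit Arguments. Unset Strict Implicit. Unset Printing Implicit Defensive.
Import Order.TTheory.

(* The square grid G = C_n x C_n, element c_i \/ d_j represented by (i, j). *)
Definition grid (n : nat) : finType := ('I_n.+1 * 'I_n.+1)%type.

Definition cd (n i j : nat) : grid n := (inord i, inord j).
Arguments cd : clear implicits.

Definition gjoin (n : nat) (x y : grid n) : grid n :=
  (inord (maxn x.1 y.1), inord (maxn x.2 y.2)).

Definition gle (n : nat) (x y : grid n) : Prop := (x.1 <= y.1)%N /\ (x.2 <= y.2)%N.

Definition covers (T : Type) (le : T -> T -> Prop) (x y : T) : Prop :=
  le x y /\ x <> y /\ (forall z, le x z -> le z y -> z = x \/ z = y).

Definition covers_or_eq (T : Type) (le : T -> T -> Prop) (x y : T) : Prop :=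
  covers le x y \/ x = y.

Definition is_join_cong (n : nat) (g : grid n -> grid n -> Prop) : Prop :=
  (forall x, g x x) /\ (forall x y, g x y -> g y x) /\
  (forall x y z, g x y -> g y z -> g x z) /\
  (forall x y z, g x y -> g (gjoin x z) (gjoin y z)).

Definition cover_preserving (n : nat) (g : grid n -> grid n -> Prop) : Prop :=
  exists (disp : Order.disp_t) (L : joinSemilatticeType disp) (phi : grid n -> L),
    (forall x y, phi (gjoin x y) = Order.join (phi x) (phi y)) /\
    (forall x y, g x y <-> phi x = phi y) /\
    (forall x y, covers (@gle n) x y ->
                 covers_or_eq (fun a b : L => (a <= b)%O) (phi x) (phi y)).

Definition gen_cong (n : nat) (R : grid n -> grid n -> Prop) : grid n -> grid n -> Prop :=
  fun x y => forall th, is_join_cong th -> (forall a b, R a b -> th a b) -> th x y.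

(* the two upper edges of the 4-cell with top c_i \/ d_j *)
Definition upper_edges (n i j : nat) (x y : grid n) : Prop :=
  (x = cd n i.-1 j /\ y = cd n i j) \/ (x = cd n i j.-1 /\ y = cd n i j).
Arguments upper_edges : clear implicits.

Definition con_cell (n i j : nat) : grid n -> grid n -> Prop :=
  gen_cong (upper_edges n i j).
Arguments con_cell : clear implicits.

Definition source_cell (n : nat) (g : grid n -> grid n -> Prop) (i j : nat) : Prop :=
  [/\ (1 <= i <= n)%N, (1 <= j <= n)%N,
      g (cd n i.-1 j) (cd n i j), g (cd n i j.-1) (cd n i j)
    & ~ g (cd n i.-1 j.-1) (cd n i j)].

Definition join_source_cons (n : nat) (g : grid n -> grid n -> Prop) :
  grid n -> grid n -> Prop :=
  gen_cong (fun x y => exists i j, @source_cell n g i j /\ con_cell n i j x y).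

From mathcomp Require Import all_boot all_order.
From mathcomp Require Import zify.
Import Order.TTheory.

Set Implicit Arguments.
Unset Strict Implicit.

(* A join-congruence of the grid is determined by the unit edges it collapses:
   a collapsed pair x, y collapses x and y with x \/ y, and a collapsed
   comparable pair collapses every edge of a monotone path between its ends.
   A collapsed edge [c_i \/ d_(j+1), c_(i+1) \/ d_(j+1)] is either the join
   with c_i \/ d_(j+1) of the edge just below it, when that edge is collapsed
   too, or the top of a cell whose bottom edge is not collapsed.  In the latter
   case cover preservation squeezes the image of the lower-right corner between
   the images of the bottom and upper-left corners, which are equal or form a
   cover, so the cell is a source cell.  As the bottom row carries no collapsed
   edge, induction down the column always ends in a source cell; the edges
   [c_i \/ d_j, c_i \/ d_(j+1)] are treated symmetrically. *)

Lemma gen_cong_is_join_cong n (R : grid n -> grid n -> Prop) :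
  is_join_cong (gen_cong R).
Proof.
split; [|split; [|split]].
- by move=> x th [refl _] _; exact: refl.
- by move=> x y xy th thJ HR; case: (thJ) => _ [sym _]; exact/sym/(xy _ thJ).
- move=> x y z xy yz th thJ HR; case: (thJ) => _ [_ [trans _]].
  exact: trans (xy _ thJ HR) (yz _ thJ HR).
- by move=> x y z xy th thJ HR; case: (thJ) => _ [_ [_ join]]; exact/join/(xy _ thJ).
Qed.

Lemma gen_cong_incl n (R : grid n -> grid n -> Prop) x y :
  R x y -> gen_cong R x y.
Proof. by move=> xy th _ HR; apply: HR. Qed.

Lemma gen_cong_least n (R th : grid n -> grid n -> Prop) :
  is_join_cong th -> (forall a b, R a b -> th a b) ->
  forall x y, gen_cong R x y -> th x y.
Proof. by move=> thJ HR x y; apply. Qed.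

Section GridArithmetic.

Variable n : nat.

Lemma cd_eta (x : grid n) : x = cd n x.1 x.2.
Proof. by case: x => a b; rewrite /cd !inord_val. Qed.

Lemma cd_inj a b c e : a <= n -> b <= n -> c <= n -> e <= n ->
  cd n a b = cd n c e -> a = c /\ b = e.
Proof. by move=> ? ? ? ? [/(congr1 val) + /(congr1 val)]; rewrite /= !inordK. Qed.

Lemma gjoin_cd a b c e p q : a <= n -> b <= n -> c <= n -> e <= n ->
  maxn a c = p -> maxn b e = q -> gjoin (cd n a b) (cd n c e) = cd n p q.
Proof. by move=> ? ? ? ? <- <-; rewrite /gjoin /cd /= !inordK. Qed.

Lemma gjoinC (x y : grid n) : gjoin x y = gjoin y x.
Proof. by rewrite /gjoin maxnC [maxn x.2 _]maxnC. Qed.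

Lemma gle_refl (x : grid n) : gle x x.
Proof. by split. Qed.

Lemma gjoin_le (x y : grid n) : gle x y -> gjoin x y = y.
Proof. by case=> /maxn_idPr e1 /maxn_idPr e2; rewrite /gjoin e1 e2 [RHS]cd_eta. Qed.

Lemma gle_gjoinl (x y : grid n) : gle x (gjoin x y).
Proof.
rewrite /gle /gjoin /= !inordK ?ltnS ?geq_max ?leq_ord //.
by split; apply: leq_maxl.
Qed.

Lemma gle_cd a b c e : a <= c <= n -> b <= e <= n -> gle (cd n a b) (cd n c e).
Proof. by move=> ? ?; rewrite /gle /cd /= !inordK; lia. Qed.

Lemma covers_cd a b c e : a <= c <= n -> b <= e <= n -> c + e = (a + b).+1 ->
  covers (@gle n) (cd n a b) (cd n c e).
Proof.
move=> ac be step; split; [exact: gle_cd | split].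
- by move=> /cd_inj []; lia.
- case=> z1 z2 [+ +] [+ +]; rewrite /cd /= !inordK; try lia.
  move=> ? ? ? ?; rewrite [(z1, z2)]cd_eta /cd /=.
  have [[-> ->]|[-> ->]] : (z1 = a :> nat /\ z2 = b :> nat) \/
    (z1 = c :> nat /\ z2 = e :> nat) by lia.
  + by left.
  + by right.
Qed.

End GridArithmetic.

Section JoinCongruenceFromEdges.

Variables (n : nat) (g D : grid n -> grid n -> Prop).
Hypotheses (gJ : is_join_cong g) (DJ : is_join_cong D).

Lemma join_cong_convex x y z : gle x y -> gle y z -> g x z -> g x y /\ g y z.
Proof.
move=> xy yz xz; case: gJ => _ [sym [trans join]].
have yz' : g y z by have := join _ _ y xz; rewrite (gjoin_le xy) gjoinC (gjoin_le yz).
by split=> //; apply: trans xz (sym _ _ yz').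
Qed.

Lemma join_cong_gjoinl x y : g x y -> g x (gjoin x y).
Proof.
by case: gJ => _ [_ [_ join]] /(join _ _ x); rewrite (gjoin_le (gle_refl x)) gjoinC.
Qed.

Hypothesis c_edges : forall i j, i < n -> j <= n ->
  g (cd n i j) (cd n i.+1 j) -> D (cd n i j) (cd n i.+1 j).
Hypothesis d_edges : forall i j, i <= n -> j < n ->
  g (cd n i j) (cd n i j.+1) -> D (cd n i j) (cd n i j.+1).

Lemma join_cong_incl_cd_of_edges a b c e : a <= c <= n -> b <= e <= n ->
  g (cd n a b) (cd n c e) -> D (cd n a b) (cd n c e).
Proof.
case: DJ => Drefl [_ [Dtrans _]].
move: {2}(c - a + (e - b)) (erefl (c - a + (e - b))) => k.
elim: k a b => [|k IH] a b dist ac be ab.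
  by have [-> ->] : c = a /\ e = b by lia.
have [ltac|lec] := ltnP a c.
- have le1 : gle (cd n a b) (cd n a.+1 b) by apply: gle_cd; lia.
  have le2 : gle (cd n a.+1 b) (cd n c e) by apply: gle_cd; lia.
  have [ab' b'c] := join_cong_convex le1 le2 ab.
  apply: Dtrans (c_edges _ _ ab') (IH _ _ _ _ _ b'c); lia.
- have le1 : gle (cd n a b) (cd n a b.+1) by apply: gle_cd; lia.
  have le2 : gle (cd n a b.+1) (cd n c e) by apply: gle_cd; lia.
  have [ab' b'c] := join_cong_convex le1 le2 ab.
  apply: Dtrans (d_edges _ _ ab') (IH _ _ _ _ _ b'c); lia.
Qed.

Lemma join_cong_incl_of_edges x y : g x y -> D x y.
Proof.
case: DJ => _ [Dsym [Dtrans _]].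
have comparable u v : gle u v -> g u v -> D u v.
  move=> [uv1 uv2] guv; rewrite [u]cd_eta [v]cd_eta.
  by apply: join_cong_incl_cd_of_edges; rewrite ?uv1 ?uv2 ?leq_ord -?cd_eta.
case: gJ => _ [gsym _] xy.
have yxy : g y (gjoin x y) by rewrite gjoinC; apply/join_cong_gjoinl/gsym.
have le_yxy : gle y (gjoin x y) by rewrite gjoinC; apply: gle_gjoinl.
exact: Dtrans (comparable _ _ (gle_gjoinl x y) (join_cong_gjoinl xy))
  (Dsym _ _ (comparable _ _ le_yxy yxy)).
Qed.

End JoinCongruenceFromEdges.

Lemma covers_or_eq_squeeze d (T : porderType d) (a b c : T) :
  covers_or_eq (fun x y : T => (x <= y)%O) a c ->
  (a <= b)%O -> (b <= c)%O -> a <> b -> b = c.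
Proof.
move=> [[_ [_ between]] | <-] ab bc nab.
- by case: (between b ab bc) => // /esym /nab.
- by case: nab; apply/eqP; rewrite eq_le ab bc.
Qed.

Section CoverPreserving.

Variables (n : nat) (g : grid n -> grid n -> Prop).
Variables (disp : Order.disp_t) (L : joinSemilatticeType disp) (phi : grid n -> L).
Hypothesis phi_join : forall x y, phi (gjoin x y) = (phi x `|` phi y)%O.
Hypothesis phi_ker : forall x y, g x y <-> phi x = phi y.
Hypothesis phi_cover : forall x y, covers (@gle n) x y ->
  covers_or_eq (fun a b : L => (a <= b)%O) (phi x) (phi y).

Lemma g_dec x y : g x y \/ ~ g x y.
Proof.
rewrite phi_ker; case: (eqVneq (phi x) (phi y)) => [->|/eqP xy]; by [left | right].
Qed.

Lemma phi_le x y : gle x y -> (phi x <= phi y)%O.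
Proof. by move/gjoin_le <-; rewrite phi_join leUl. Qed.

Lemma cell_squeeze a b c t : gjoin b c = t -> gle a b -> covers (@gle n) a c ->
  g c t -> ~ g a b -> g b t /\ ~ g a t.
Proof.
move=> bct ab ac /phi_ker ct nab.
have nab' : phi a <> phi b by move/phi_ker.
have bc : (phi b <= phi c)%O by rewrite ct -bct phi_join leUl.
have eqbc := covers_or_eq_squeeze (phi_cover ac) (phi_le ab) bc nab'.
split; first by apply/phi_ker; rewrite eqbc.
by move/phi_ker; rewrite -ct -eqbc.
Qed.

Lemma source_cell_of_c_edge i j : i < n -> j < n ->
  g (cd n i j.+1) (cd n i.+1 j.+1) -> ~ g (cd n i j) (cd n i.+1 j) ->
  source_cell g i.+1 j.+1.
Proof.
move=> hi hj ct nab.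
have [bt not_at] : g (cd n i.+1 j) (cd n i.+1 j.+1) /\ ~ g (cd n i j) (cd n i.+1 j.+1).
  apply: cell_squeeze ct nab; [apply: gjoin_cd | apply: gle_cd | apply: covers_cd]; lia.
by split=> //; lia.
Qed.

Lemma source_cell_of_d_edge i j : i < n -> j < n ->
  g (cd n i.+1 j) (cd n i.+1 j.+1) -> ~ g (cd n i j) (cd n i j.+1) ->
  source_cell g i.+1 j.+1.
Proof.
move=> hi hj bt nac.
have [ct not_at] : g (cd n i j.+1) (cd n i.+1 j.+1) /\ ~ g (cd n i j) (cd n i.+1 j.+1).
  apply: cell_squeeze bt nac; [apply: gjoin_cd | apply: gle_cd | apply: covers_cd]; lia.
by split=> //; lia.
Qed.

Variable D : grid n -> grid n -> Prop.
Hypothesis DJ : is_join_cong D.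
Hypothesis D_source : forall i j, source_cell g i j ->
  D (cd n i.-1 j) (cd n i j) /\ D (cd n i j.-1) (cd n i j).

Lemma c_edge_incl i j : (forall i, 1 <= i <= n -> ~ g (cd n i.-1 0) (cd n i 0)) ->
  i < n -> j <= n -> g (cd n i j) (cd n i.+1 j) -> D (cd n i j) (cd n i.+1 j).
Proof.
move=> bottom_free hi; elim: j => [|j IH] hj top.
  have hi1 : 1 <= i.+1 <= n by lia.
  by case: (bottom_free _ hi1 top).
case: (g_dec (cd n i j) (cd n i.+1 j)) => [below | nbelow].
- case: DJ => _ [_ [_ Djoin]].
  have := Djoin _ _ (cd n i j.+1) (IH (ltnW hj) below).
  by rewrite (@gjoin_cd n i j i j.+1 i j.+1) ?(@gjoin_cd n i.+1 j i j.+1 i.+1 j.+1) //; lia.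
- exact: (D_source (source_cell_of_c_edge hi hj top nbelow)).1.
Qed.

Lemma d_edge_incl i j : (forall j, 1 <= j <= n -> ~ g (cd n 0 j.-1) (cd n 0 j)) ->
  i <= n -> j < n -> g (cd n i j) (cd n i j.+1) -> D (cd n i j) (cd n i j.+1).
Proof.
move=> left_free + hj; elim: i => [|i IH] hi top.
  have hj1 : 1 <= j.+1 <= n by lia.
  by case: (left_free _ hj1 top).
case: (g_dec (cd n i j) (cd n i j.+1)) => [left | nleft].
- case: DJ => _ [_ [_ Djoin]].
  have := Djoin _ _ (cd n i.+1 j) (IH (ltnW hi) left).
  by rewrite (@gjoin_cd n i j i.+1 j i.+1 j) ?(@gjoin_cd n i j.+1 i.+1 j i.+1 j.+1) //; lia.
- exact: (D_source (source_cell_of_d_edge hi hj top nleft)).2.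
Qed.

End CoverPreserving.

Lemma join_source_cons_upper_edges n (g : grid n -> grid n -> Prop) i j :
  source_cell g i j ->
  join_source_cons g (cd n i.-1 j) (cd n i j) /\ join_source_cons g (cd n i j.-1) (cd n i j).
Proof.
by move=> src; split; apply: gen_cong_incl; exists i, j; split=> //;
  apply: gen_cong_incl; [left | right].
Qed.

Lemma join_source_cons_incl n (g : grid n -> grid n -> Prop) :
  is_join_cong g -> forall x y, join_source_cons g x y -> g x y.
Proof.
move=> gJ; apply: gen_cong_least => // x y [i [j [[_ _ ct bt _] xy]]].
by apply: (gen_cong_least gJ _ xy) => u v [[-> ->]|[-> ->]].
Qed.

Theorem lemma4p7 (n : nat) (g : grid n -> grid n -> Prop) :
  is_join_cong g -> cover_preserving g ->
  (forall i, (1 <= i <= n)%N -> ~ g (cd n i.-1 0) (cd n i 0)) ->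
  (forall i, (1 <= i <= n)%N -> ~ g (cd n 0 i.-1) (cd n 0 i)) ->
  forall x y, g x y <-> @join_source_cons n g x y.
Proof.
move=> gJ [disp [L [phi [phi_join [phi_ker phi_cover]]]]] bottom_free left_free x y.
split; last exact: join_source_cons_incl.
have DJ : is_join_cong (join_source_cons g) := gen_cong_is_join_cong _.
have D_source := @join_source_cons_upper_edges n g.
apply: join_cong_incl_of_edges => // i j hi hj.
- exact: (c_edge_incl phi_join phi_ker phi_cover DJ D_source bottom_free).
- exact: (d_edge_incl phi_join phi_ker phi_cover DJ D_source left_free).
Qed.
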